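(* Let $G$ be a tree on $k$ vertices, $n\ge 1$, $e=(s,t)$ an edge of $G$, and let $\{u,v\}$ be one of the two special edges $\{s^n,t^n\}$, $\{s^{n-1}t,\,t^{n-1}s\}$ of the unique $e$-cycle of length $2^n$ in $\Gamma^G_n$. Then $$n(u,v)\,n(v,u)=n_G(s,t)\,n_G(t,s)\,k^{2(n-1)}=n_G(s,t)k^{n-1}\left(k^n-n_G(s,t)k^{n-1}\right)=n_G(t,s)k^{n-1}\left(k^n-n_G(t,s)k^{n-1}\right),$$ where $n_G(s,t)$ is the number of vertices of $G$ closer to $s$ than to $t$.
   Context: Let $G=(V,E)$ be a finite tree with vertex set $V$ of size $k$, and fix an orientation of each edge, so that each edge becomes an ordered pair $e=(s,t)$. Each oriented edge $e=(s,t)$ acts on the set $V^*$ of finite words over the alphabet $V$ by the recursive rule: $e(\emptyset)=\emptyset$, $e(sw)=t\,e(w)$, $e(tw)=sw$, and $e(xw)=xw$ for $x\in V\setminus\{s,t\}$ (words are read left to right, $w\in V^*$). This action preserves word length. For $n\ge 1$, the Schreier graph $\Gamma_n^G$ is the multigraph with vertex set $V^n$ having, for each $u\in V^n$ and each oriented edge $e$ of $G$, one edge joining $u$ and $e(u)$, labelled $e$ (a loop if $e(u)=u$). The orbit of $s^n$ under $e$ is $\{s,t\}^n$, forming with its $e$-labelled edges the unique $e$-cycle of length $2^n$. For vertices $u,v$ of a graph $H$, $n(u,v)$ (resp. $n_G(u,v)$ in $G$) is the number of vertices strictly closer in graph distance to $u$ than to $v$. *)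

From mathcomp Require Import all_boot.
Set Implicit Arguments. Unset Strict Implicit. Unset Printing Implicit Defensive.

Section Defs.
Variable T : finType.

(* Graph distance for a (symmetric) adjacency relation r on a finite type:
   ball r m u = set of vertices reachable from u by a walk of length <= m;
   gdist r u v = least m with v in ball r m u (= #|T|.+1 if unreachable). *)
Definition nbhd (r : rel T) (A : {set T}) : {set T} :=
  A :|: [set y | [exists x in A, r x y]].
Definition ball (r : rel T) (m : nat) (u : T) : {set T} := iter m (nbhd r) [set u].
Definition gdist (r : rel T) (u v : T) : nat :=
  find (fun m => v \in ball r m u) (iota 0 #|T|.+1).

Definition ncloser (r : rel T) (u v : T) : nat :=
  #|[set w | gdist r u w < gdist r v w]|.
End Defs.

Section Tree.
Variable V : finType.
Definition undir (o : rel V) : rel V := fun x y => o x y || o y x.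

Definition oriented_tree (o : rel V) : Prop :=
  (forall x, ~~ o x x) /\
  (forall x y, o x y -> ~~ o y x) /\
  (forall x y, connect (undir o) x y) /\
  (forall c : seq V, uniq c -> 2 < size c -> ~~ cycle (undir o) c).

Fixpoint edge_act (s t : V) (w : seq V) : seq V :=
  match w with
  | [::] => [::]
  | x :: w' => if x == s then t :: edge_act s t w'
               else if x == t then s :: w'
               else x :: w'
  end.

(* Adjacency of the Schreier graph Gamma_n^G on V^n (loops/multiplicities
   are irrelevant for distances). *)
Definition schreier_adj (o : rel V) (n : nat) : rel (n.-tuple V) :=
  fun u v => [exists e : V * V, o e.1 e.2 &&
     ((edge_act e.1 e.2 u == v :> seq V) || (edge_act e.1 e.2 v == u :> seq V))].
End Tree.
Arguments schreier_adj {V} o n.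

From mathcomp Require Import all_boot perm zify.
Set Implicit Arguments. Unset Strict Implicit. Unset Printing Implicit Defensive.

(* Removing the edge {s, t} splits the tree into the branch B of s, whose vertices
   are exactly those closer to s than to t, and its complement.  In Gamma_n let S be
   the set of words whose last letter lies in B, so #|S| = #|B| k^(n-1).  An edge
   action changes the last letter only after carrying through a constant prefix,
   hence the only edges leaving S are the two special edges {s^n, t^n} and
   {s^(n-1)t, t^(n-1)s}.  Moreover d(t^n, s^(n-1)t) = d(s^n, t^(n-1)s) = 2^(n-1) - 1:
   the upper bound runs along the e-cycle and the lower bound comes from a
   1-Lipschitz projection of Gamma_n onto that cycle.
   Therefore, for either special edge {u, v} with u in S, every vertex of S is closer
   to u and every other vertex is closer to v, i.e. n(u,v) n(v,u) = #|S| #|~: S|. *)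

Section Balls.
Variables (T : finType) (r : rel T).

Lemma ballS m u : ball r m.+1 u = nbhd r (ball r m u).
Proof. by []. Qed.

Lemma ball_mono m m' u : m <= m' -> {subset ball r m u <= ball r m' u}.
Proof.
elim: m' => [|m' IH]; first by rewrite leqn0 => /eqP ->.
rewrite leq_eqVlt => /orP[/eqP -> // | /IH sub] y /sub y_in.
by rewrite ballS in_setU y_in.
Qed.

Lemma ball_center m u : u \in ball r m u.
Proof. by apply: (ball_mono (leq0n m)); rewrite set11. Qed.

Lemma ball_adj m u x y : x \in ball r m u -> r x y -> y \in ball r m.+1 u.
Proof.
move=> x_in rxy; rewrite ballS in_setU inE; apply/orP; right.
by apply/existsP; exists x; rewrite x_in.
Qed.

Lemma ballSP m u y :
  y \in ball r m.+1 u -> y \in ball r m u \/ exists2 x, x \in ball r m u & r x y.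
Proof.
rewrite ballS in_setU inE => /orP[y_in | /existsP[x /andP[x_in rxy]]].
  by left.
by right; exists x.
Qed.

Lemma path_last_ball x p : path r x p -> last x p \in ball r (size p) x.
Proof.
elim/last_ind: p => [|p z IH]; first by rewrite ball_center.
rewrite rcons_path last_rcons size_rcons => /andP[/IH last_in rz].
exact: ball_adj last_in rz.
Qed.

Lemma connect_ball x y : connect r x y -> y \in ball r #|T| x.
Proof.
move=> /connectP[p xp ->]; have [p' xp' uniq_p' _] := shortenP xp.
apply: ball_mono (path_last_ball xp').
by have := max_card (mem (x :: p')); rewrite (card_uniqP uniq_p') => /ltnW.
Qed.

Lemma gdist_leq m u w : w \in ball r m u -> gdist r u w <= m.
Proof.
move=> w_in; rewrite /gdist; case: (leqP m #|T|) => [m_le | m_gt].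
  rewrite leqNgt; apply/negP => /(before_find 0).
  by rewrite nth_iota ?ltnS // add0n w_in.
by apply: leq_trans (find_size _ _) _; rewrite size_iota.
Qed.

Lemma mem_ball_gdist u w : w \in ball r #|T| u -> w \in ball r (gdist r u w) u.
Proof.
move=> w_in; have has_w : has (fun m => w \in ball r m u) (iota 0 #|T|.+1).
  by apply/hasP; exists #|T|; rewrite // mem_iota add0n ltnS leqnn.
have := nth_find 0 has_w; rewrite nth_iota ?add0n //.
by move: has_w; rewrite has_find size_iota.
Qed.

Lemma ball_lipschitz (d : T -> T -> nat) :
  (forall x, d x x = 0) -> (forall x y z, d x z <= d x y + d y z) ->
  (forall x y, r x y -> d x y <= 1) ->
  forall m x y, y \in ball r m x -> d x y <= m.
Proof.
move=> d0 d_tri d_adj; elim=> [|m IH] x y.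
  by rewrite inE => /eqP ->; rewrite d0.
case/ballSP => [/IH | [z /IH dxz /d_adj dzy]]; first lia.
by apply: leq_trans (d_tri x z y) _; rewrite -addn1 leq_add.
Qed.

End Balls.

Section TwoEdgeCut.
Variables (T : finType) (r : rel T) (S : {set T}) (u v p q : T).
Hypothesis r_connected : forall x y, y \in ball r #|T| x.
Hypothesis v_out : v \notin S.
Hypothesis cut_edges : forall x y, r x y -> x \notin S -> y \in S ->
  (x = v /\ y = u) \/ (x = p /\ y = q).
Hypothesis same_dist : forall j, (p \in ball r j v) = (q \in ball r j u).

(* A walk from v into S enters S along (v, u) or (p, q); either way it is one step
   longer than a walk from u. *)
Lemma cut_ball_shift j w : w \in S -> w \in ball r j v -> 0 < j /\ w \in ball r j.-1 u.
Proof.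
elim: j w => [|j IH] w w_in.
  by rewrite inE => /eqP w_v; move: v_out; rewrite -w_v w_in.
case/ballSP => [/(IH _ w_in)[_ /(ball_mono (leq_pred j))] // | [x x_in rxw]].
split=> //=; have [x_S | x_nS] := boolP (x \in S).
  by have [j_gt0 /ball_adj/(_ rxw)] := IH _ x_S x_in; rewrite prednK.
have [[_ ->] | [x_p ->]] := cut_edges rxw x_nS w_in; first exact: ball_center.
by rewrite -same_dist -x_p.
Qed.

Lemma cut_closer w : w \in S -> gdist r u w < gdist r v w.
Proof.
move=> w_in; have [j_gt0 w_ball] := cut_ball_shift w_in (mem_ball_gdist (r_connected v w)).
by apply: leq_ltn_trans (gdist_leq w_ball) _; rewrite prednK.
Qed.

End TwoEdgeCut.

Lemma ncloser_cut (T : finType) (r : rel T) (S : {set T}) (u v p q : T) :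
  symmetric r -> (forall x y, y \in ball r #|T| x) -> u \in S -> v \notin S ->
  (forall x y, r x y -> x \notin S -> y \in S -> (x = v /\ y = u) \/ (x = p /\ y = q)) ->
  (forall j, (p \in ball r j v) = (q \in ball r j u)) ->
  ncloser r u v = #|S| /\ ncloser r v u = #|~: S|.
Proof.
move=> r_sym r_conn u_in v_out cut_edges same_dist.
have closer_in := cut_closer r_conn v_out cut_edges same_dist.
have closer_out : forall w, w \in ~: S -> gdist r v w < gdist r u w.
  apply: (@cut_closer _ _ _ _ _ q p) => //; rewrite ?inE ?negbK //.
  move=> x y; rewrite r_sym !inE negbK => ryx x_in y_out.
  by have [[-> ->] | [-> ->]] := cut_edges _ _ ryx y_out x_in; [left | right].
split; apply: eq_card => w; rewrite !inE; have [w_in | w_out] := boolP (w \in S).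
- exact: closer_in.
- by rewrite leq_gtF // ltnW // closer_out ?inE.
- by rewrite leq_gtF // ltnW // closer_in.
- by rewrite closer_out ?inE.
Qed.

Section TreeBranch.
Variables (V : finType) (o : rel V) (s t : V).
Hypothesis o_tree : oriented_tree o.
Hypothesis o_st : o s t.

Lemma undir_sym : symmetric (undir o).
Proof. by move=> x y; rewrite /undir orbC. Qed.

Lemma tree_connected x y : y \in ball (undir o) #|V| x.
Proof. by case: o_tree => _ [_ [conn _]]; apply: connect_ball. Qed.

Lemma neq_edge : s != t.
Proof. by case: o_tree => irr _; apply: contraTneq o_st => ->; apply: irr. Qed.

Definition undir_del : rel V :=
  fun x y => undir o x y && ~~ ((x == s) && (y == t) || (x == t) && (y == s)).

Definition branch : {set V} := [set y | connect undir_del s y].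

Lemma undir_del_sym : symmetric undir_del.
Proof.
move=> x y; rewrite /undir_del undir_sym; congr (_ && ~~ _).
by rewrite orbC [(y == s) && _]andbC [(y == t) && _]andbC.
Qed.

Lemma mem_branch_s : s \in branch.
Proof. by rewrite inE connect0. Qed.

(* A path from s to t avoiding the edge {s, t} would close a cycle. *)
Lemma branch_t : t \notin branch.
Proof.
case: o_tree => irr [asym [_ acyc]]; rewrite inE; apply/negP => /connectP[p sp].
case: (shortenP sp) => p' sp' uniq_p' _.
have del_undir : subrel undir_del (undir o) by move=> x y /andP[].
case: p' sp' uniq_p' => [|y1 [|y2 p']].
- by move=> _ _ /= t_s; move: o_st; rewrite t_s (negbTE (irr s)).
- by move=> /= + _ t_y1; rewrite -t_y1 /undir_del !eqxx andbF.
move=> path_p uniq_p last_p; have := acyc _ uniq_p isT.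
by rewrite /cycle rcons_path (sub_path del_undir path_p) -last_p /undir o_st orbT.
Qed.

Lemma branch_cross x y : undir o x y -> (x \in branch) != (y \in branch) ->
  (x = s /\ y = t) \/ (x = t /\ y = s).
Proof.
move=> xy; have [del_xy | ] := boolP (undir_del x y).
  have del_yx : undir_del y x by rewrite undir_del_sym.
  suff -> : (x \in branch) = (y \in branch) by rewrite eqxx.
  by rewrite !inE; apply/idP/idP => /connect_trans; apply; apply: connect1.
rewrite /undir_del xy negbK => /orP[] /andP[/eqP -> /eqP ->] _; by [left | right].
Qed.

Lemma ncloser_branch :
  ncloser (undir o) s t = #|branch| /\ ncloser (undir o) t s = #|~: branch|.
Proof.
apply: (@ncloser_cut _ _ _ s t t s undir_sym tree_connected mem_branch_s branch_t).
  move=> x y xy x_out y_in.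
  have x_y : (x \in branch) != (y \in branch) by rewrite (negbTE x_out) y_in.
  have [[x_s _] | ] := branch_cross xy x_y; last by left.
  by move: x_out; rewrite x_s mem_branch_s.
by move=> j; rewrite !ball_center.
Qed.

End TreeBranch.

Lemma connect_homo (T1 T2 : finType) (e1 : rel T1) (e2 : rel T2) (f : T1 -> T2) :
  (forall x y, e1 x y -> connect e2 (f x) (f y)) ->
  forall x y, connect e1 x y -> connect e2 (f x) (f y).
Proof.
move=> f_homo x y /connectP[p + ->]; elim: p x => [|z p IH] x /=; first by rewrite connect0.
by case/andP=> /f_homo xz /IH; apply: connect_trans.
Qed.

Lemma rcons_nseq (T : Type) m (x : T) : rcons (nseq m x) x = nseq m.+1 x.
Proof. by elim: m => //= m ->. Qed.

Lemma last_nseq (T : Type) m (x : T) : last x (nseq m x) = x.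
Proof. by elim: m. Qed.

Section EdgeAction.
Variables (V : finType) (a b : V).

Lemma edge_act_rcons z l : edge_act a b (rcons z l) =
  if all (pred1 a) z then rcons (nseq (size z) b) (tperm a b l)
  else rcons (edge_act a b z) l.
Proof.
elim: z => [|x z IH] /=.
  have [-> | l_a] := eqVneq l a; first by rewrite tpermL.
  have [-> | l_b] := eqVneq l b; first by rewrite tpermR.
  by rewrite tpermD // eq_sym.
by case: (x =P a) => _ /=; rewrite ?IH; case: ifP.
Qed.

Lemma edge_act_nseq m : edge_act a b (nseq m a) = nseq m b.
Proof. by elim: m => //= m ->; rewrite eqxx. Qed.

Lemma edge_act_rcons_nseq m : edge_act a b (rcons (nseq m a) b) = rcons (nseq m b) a.
Proof. by rewrite edge_act_rcons all_pred1_nseq size_nseq tpermR. Qed.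

End EdgeAction.

Section SchreierCut.
Variables (V : finType) (o : rel V) (s t : V).
Hypothesis o_tree : oriented_tree o.
Hypothesis o_st : o s t.

Local Notation B := (branch o s t).

Lemma schreier_adj_sym n : symmetric (schreier_adj o n).
Proof. by move=> x y; apply/existsP/existsP => -[e]; exists e; rewrite orbC. Qed.

Lemma edge_act_last_branch a b w : o a b ->
  (last s (edge_act a b w) \in B) != (last s w \in B) ->
  [/\ a = s, b = t & w = nseq (size w) s \/ w = rcons (nseq (size w).-1 s) t].
Proof.
move=> o_ab; case/lastP: w => [|z l]; first by rewrite eqxx.
rewrite edge_act_rcons size_rcons /=; case: ifP => [/all_pred1P z_a | _]; last first.
  by rewrite !last_rcons eqxx.
rewrite !last_rcons => side_l.
have l_ab : (l == a) || (l == b).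
  by apply: contraR side_l; rewrite negb_or => /andP[l_a l_b]; rewrite tpermD // eq_sym.
have side_ab : (a \in B) != (b \in B).
  by case/orP: l_ab side_l => /eqP ->; rewrite ?tpermL ?tpermR // eq_sym.
have ab_undir : undir o a b by rewrite /undir o_ab.
have [[a_s b_t] | [a_t b_s]] := branch_cross ab_undir side_ab; last first.
  by case: o_tree => _ [asym _]; move: (asym _ _ o_st); rewrite -a_t -b_s o_ab.
rewrite z_a size_nseq a_s; split=> //; case/orP: l_ab => /eqP ->; rewrite ?a_s ?b_t.
  by left; rewrite rcons_nseq.
by right.
Qed.

Definition last_branch m : {set m.+1.-tuple V} := [set w : m.+1.-tuple V | last s w \in B].

Lemma mem_last_branch m (w : m.+1.-tuple V) : (w \in last_branch m) = (last s w \in B).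
Proof. by rewrite [LHS]inE. Qed.

Lemma schreier_cross m (x y : m.+1.-tuple V) : schreier_adj o m.+1 x y ->
  x \notin last_branch m -> y \in last_branch m ->
  (x = nseq_tuple m.+1 t /\ y = nseq_tuple m.+1 s) \/
  (x = rcons_tuple (nseq_tuple m s) t /\ y = rcons_tuple (nseq_tuple m t) s).
Proof.
rewrite !mem_last_branch => /existsP[[a b] /andP[/= o_ab]] act x_out y_in.
have s_B := mem_branch_s o s t; have t_B := branch_t o_tree o_st.
case/orP: act => /eqP act.
- have side_x : (last s (edge_act a b x) \in B) != (last s x \in B).
    by rewrite act y_in (negbTE x_out).
  have [a_s b_t [x_s | x_st]] := edge_act_last_branch o_ab side_x.
    by move: x_out; rewrite x_s size_tuple -rcons_nseq last_rcons s_B.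
  right; split; apply: val_inj => /=; first by rewrite x_st size_tuple.
  by rewrite -act x_st size_tuple a_s b_t edge_act_rcons_nseq.
- have side_y : (last s (edge_act a b y) \in B) != (last s y \in B).
    by rewrite act y_in (negbTE x_out).
  have [a_s b_t [y_s | y_st]] := edge_act_last_branch o_ab side_y.
    left; split; apply: val_inj => /=; last by rewrite y_s size_tuple.
    by rewrite -act y_s size_tuple a_s b_t edge_act_nseq.
  by move: y_in; rewrite y_st last_rcons (negbTE t_B).
Qed.

End SchreierCut.

Section SchreierConnected.
Variables (V : finType) (o : rel V).
Hypothesis o_tree : oriented_tree o.

Lemma edge_act_head (a b : V) w : a != b -> edge_act a b (b :: w) = a :: w.
Proof. by move=> a_b /=; rewrite eq_sym (negbTE a_b) eqxx. Qed.

Lemma schreier_adj_head n (w : n.-tuple V) x y :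
  undir o x y -> schreier_adj o n.+1 (cons_tuple x w) (cons_tuple y w).
Proof.
case/orP=> [o_xy | o_yx]; apply/existsP.
  by exists (x, y); rewrite o_xy edge_act_head ?(neq_edge o_tree) ?eqxx ?orbT.
by exists (y, x); rewrite o_yx edge_act_head ?(neq_edge o_tree) ?eqxx.
Qed.

Lemma connect_schreier_head n (w : n.-tuple V) x y :
  connect (schreier_adj o n.+1) (cons_tuple x w) (cons_tuple y w).
Proof.
case: o_tree => _ [_ [conn _]].
apply: (connect_homo (e1 := undir o) (f := fun z => cons_tuple z w)) (conn x y).
by move=> a b /(schreier_adj_head w)/connect1.
Qed.

Lemma connect_schreier_tail n (w w' : n.-tuple V) c :
  schreier_adj o n w w' -> connect (schreier_adj o n.+1) (cons_tuple c w) (cons_tuple c w').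
Proof.
have lift (z z' : n.-tuple V) a b : o a b -> edge_act a b z = z' ->
    connect (schreier_adj o n.+1) (cons_tuple c z) (cons_tuple c z').
  move=> o_ab act; apply: connect_trans (connect_schreier_head z c a) _.
  apply: connect_trans (connect_schreier_head z' b c); apply: connect1; apply/existsP.
  by exists (a, b); rewrite o_ab /= eqxx act eqxx.
case/existsP=> -[a b] /andP[o_ab /orP[/eqP act | /eqP act]]; first exact: lift act.
by rewrite (sym_connect_sym (@schreier_adj_sym _ o _)); apply: lift act.
Qed.

Lemma schreier_connected n (x y : n.-tuple V) : connect (schreier_adj o n) x y.
Proof.
elim: n x y => [|n IH] x y; first by rewrite (tuple0 x) (tuple0 y) connect0.
have eta (z : n.+1.-tuple V) : z = cons_tuple (thead z) (behead_tuple z).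
  by apply: val_inj; case: z => -[].
rewrite (eta x) (eta y); apply: (@connect_trans _ _ (cons_tuple (thead x) (behead_tuple y))).
  by apply: (connect_homo _ (IH _ _)) => z z'; apply: connect_schreier_tail.
exact: connect_schreier_head.
Qed.

End SchreierConnected.

Lemma card_last_in (V : finType) m (A : {set V}) (x0 : V) :
  #|[set w : m.+1.-tuple V | last x0 w \in A]| = #|A| * #|V| ^ m.
Proof.
have -> : [set w : m.+1.-tuple V | last x0 w \in A] =
          (fun p : m.-tuple V * V => rcons_tuple p.1 p.2) @: setX [set: m.-tuple V] A.
  apply/setP => w; rewrite inE; apply/idP/imsetP => [|[[z l]]]; last first.
    by rewrite inE /= => /andP[_ l_A] ->; rewrite last_rcons.
  case: w => w size_w /= l_A; case/lastP: w size_w l_A => [|z l] // size_zl.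
  rewrite last_rcons => l_A; have size_z : size z == m by rewrite size_rcons eqSS in size_zl.
  by exists (Tuple size_z, l); rewrite ?inE ?l_A //; apply: val_inj.
rewrite card_imset ?cardsX ?cardsT ?card_tuple 1?mulnC // => -[z l] [z' l'] /(congr1 val) /=.
by case/rcons_inj=> /val_inj -> ->.
Qed.

Definition cycdist (N i j : nat) : nat := minn ((i - j) + (j - i)) (N - ((i - j) + (j - i))).

Lemma cycdistC N i j : cycdist N i j = cycdist N j i.
Proof. rewrite /cycdist; lia. Qed.

Lemma cycdistnn N i : cycdist N i i = 0.
Proof. by rewrite /cycdist subnn min0n. Qed.

Lemma cycdist_triangle N i j k : i < N -> j < N -> k < N ->
  cycdist N i k <= cycdist N i j + cycdist N j k.
Proof. rewrite /cycdist; lia. Qed.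

Lemma pred_exp2S n : (2 ^ n.+1).-1 = true + (2 ^ n).-1.*2.
Proof. by rewrite expnS -mul2n; have := expn_gt0 2 n; lia. Qed.

Section CycleWord.
Variables (V : finType) (s t : V).

Fixpoint cycle_word (n i : nat) : seq V :=
  if n is n'.+1 then (if odd i then s else t) :: cycle_word n' i./2 else [::].

Lemma size_cycle_word n i : size (cycle_word n i) = n.
Proof. by elim: n i => //= n IH i; rewrite IH. Qed.

Lemma cycle_word0 n : cycle_word n 0 = nseq n t.
Proof. by elim: n => //= n ->. Qed.

Lemma cycle_word_pred_exp n : cycle_word n (2 ^ n).-1 = nseq n s.
Proof.
by elim: n => //= n IH; rewrite pred_exp2S half_bit_double oddD odd_double IH.
Qed.

Lemma cycle_word_last_t m : cycle_word m.+1 (2 ^ m).-1 = rcons (nseq m s) t.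
Proof.
by elim: m => //= m IH; rewrite pred_exp2S half_bit_double oddD odd_double -IH.
Qed.

Lemma cycle_word_last_s m : cycle_word m.+1 (2 ^ m) = rcons (nseq m t) s.
Proof. by elim: m => //= m IH; rewrite expnS mul2n odd_double doubleK -IH. Qed.

Hypothesis neq_st : s != t.

Lemma edge_act_cycle_word n i : edge_act s t (cycle_word n i) = cycle_word n i.+1.
Proof.
elim: n i => //= n IH i; rewrite uphalf_half.
case: (odd i) => /=; first by rewrite eqxx IH.
by rewrite eq_sym (negbTE neq_st) eqxx.
Qed.

End CycleWord.

Section CycleIndex.
Variables (V : finType) (A : {set V}) (s t : V).

Definition foreign (x : V) := (x != s) && (x != t).

(* Reading s as 1 and t as 0, a word of {s, t}^n is the little-endian binary
   expansion of its position on the e-cycle.  A general word is projected onto the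
   cycle by overwriting every letter up to its last foreign letter y by [y \in A]. *)
Fixpoint cycle_index (w : seq V) : nat :=
  if w is x :: w' then
    (if has foreign w' then odd (cycle_index w') else x \in A) + (cycle_index w').*2
  else 0.

Lemma cycle_index_lt w : cycle_index w < 2 ^ size w.
Proof.
elim: w => //= x w IH; rewrite expnS -mul2n.
by case: ifP => _; [have := leq_b1 (odd (cycle_index w)) | have := leq_b1 (x \in A)]; lia.
Qed.

(* The second conjunct is the induction invariant: the occurrence of a foreign
   letter can only change at a position whose bit is already copied from [a \in A]. *)
Lemma cycle_index_edge_act_side a b w : (a \in A) = (b \in A) ->
  cycle_index (edge_act a b w) = cycle_index w /\
  (has foreign (edge_act a b w) != has foreign w -> odd (cycle_index w) = (a \in A)).
Proof.
move=> ab_A; have odd_bit (c : bool) k : odd (c + k.*2) = c.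
  by case: c; rewrite /= odd_double.
elim: w => [|x w [IH_idx IH_flag]] //=.
have [x_a | x_a] := eqVneq x a; last have [x_b | x_b] := eqVneq x b.
- rewrite /= IH_idx x_a; case: (boolP (has foreign w)) IH_flag;
    case: (boolP (has foreign (edge_act a b w))) => _ _ IH_flag;
    by rewrite ?odd_bit ?orbT -?ab_A ?(IH_flag isT).
- by rewrite /= x_b -ab_A; case: ifP => _; split; rewrite ?orbT ?orbF ?eqxx.
- by split=> //=; rewrite eqxx.
Qed.

Lemma has_foreign_edge_act_st w : has foreign (edge_act s t w) = has foreign w.
Proof.
elim: w => //= x w IH; case: (x =P s) => [-> | _]; first by rewrite /= IH /foreign !eqxx andbF.
by case: (x =P t) => [-> | _]; rewrite /= /foreign ?eqxx ?andbF.
Qed.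

Hypotheses (s_A : s \in A) (t_A : t \notin A).

Lemma cycle_index_edge_act_st w : cycle_index (edge_act s t w) =
  if has foreign w then cycle_index w else (cycle_index w).+1 %% 2 ^ size w.
Proof.
elim: w => //= x w IH; have idx_lt := cycle_index_lt w.
have [-> | x_s] := eqVneq x s; last have [-> | x_t] := eqVneq x t.
- rewrite /= IH has_foreign_edge_act_st /foreign eqxx /= (negbTE t_A) s_A.
  case: (has foreign w) => //; rewrite expnS -!mul2n.
  have [lt | eq] : (cycle_index w).+1 < 2 ^ size w \/ (cycle_index w).+1 = 2 ^ size w by lia.
    by rewrite !modn_small; lia.
  by rewrite eq modnn (_ : (true + _).+1 = 2 * 2 ^ size w) ?modnn //; lia.
- rewrite /= /foreign eqxx andbF /= s_A (negbTE t_A).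
  by case: (has foreign w) => //; rewrite modn_small // expnS -mul2n; lia.
- by rewrite /= /foreign x_s x_t.
Qed.

Lemma cycle_index_cycle_word n i : cycle_index (cycle_word s t n i) = i %% 2 ^ n.
Proof.
have no_foreign m j : has foreign (cycle_word s t m j) = false.
  elim: m j => //= m IH j; rewrite IH orbF /foreign.
  by case: ifP => _; rewrite eqxx ?andbF.
elim: n i => [|n IH] i; first by rewrite modn1.
rewrite /= no_foreign IH (fun_if (fun x => x \in A)) s_A (negbTE t_A).
have -> : (if odd i then true else false) = odd i by case: (odd i).
have r_lt : i./2 %% 2 ^ n < 2 ^ n by rewrite ltn_mod expn_gt0.
have i_eq : i = i./2 %/ 2 ^ n * 2 ^ n.+1 + (odd i + (i./2 %% 2 ^ n).*2).
  have := divn_eq i./2 (2 ^ n); have := odd_double_half i.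
  rewrite expnS mulnCA -!mul2n; lia.
have lt2 : odd i + (i./2 %% 2 ^ n).*2 < 2 ^ n.+1.
  by rewrite expnS -mul2n; case: (odd i); lia.
by rewrite [X in _ = X %% _]i_eq modnMDl (modn_small lt2).
Qed.

End CycleIndex.

Section SchreierDistance.
Variables (V : finType) (o : rel V) (s t : V).
Hypothesis o_tree : oriented_tree o.
Hypothesis o_st : o s t.

Local Notation B := (branch o s t).
Local Notation index := (cycle_index B s t).

Definition cycle_gap n (x y : n.-tuple V) : nat := cycdist (2 ^ n) (index x) (index y).

Lemma cycle_gap_edge_act a b w : o a b ->
  cycdist (2 ^ size w) (index w) (index (edge_act a b w)) <= 1.
Proof.
move=> o_ab; have s_B := mem_branch_s o s t; have t_B := branch_t o_tree o_st.
have [side | side] := eqVneq (a \in B) (b \in B).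
  by have [-> _] := cycle_index_edge_act_side s t w side; rewrite cycdistnn.
have ab_undir : undir o a b by rewrite /undir o_ab.
have [[-> ->] | [a_t b_s]] := branch_cross ab_undir side; last first.
  by case: o_tree => _ [asym _]; move: (asym _ _ o_st); rewrite -a_t -b_s o_ab.
rewrite cycle_index_edge_act_st //; case: ifP => _; first by rewrite cycdistnn.
have := cycle_index_lt B s t w; set v := index w => v_lt.
have [lt | eq] : v.+1 < 2 ^ size w \/ v.+1 = 2 ^ size w by lia.
  by rewrite modn_small // /cycdist; lia.
by rewrite eq modnn /cycdist; lia.
Qed.

Lemma cycle_gap_adj n (x y : n.-tuple V) : schreier_adj o n x y -> cycle_gap x y <= 1.
Proof.
case/existsP=> -[a b] /andP[/= o_ab /orP[] /eqP act]; rewrite /cycle_gap -act.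
  by have := cycle_gap_edge_act x o_ab; rewrite size_tuple.
by rewrite cycdistC; have := cycle_gap_edge_act y o_ab; rewrite size_tuple.
Qed.

Lemma cycle_gap_ball n j (x y : n.-tuple V) :
  y \in ball (schreier_adj o n) j x -> cycle_gap x y <= j.
Proof.
have index_lt (z : n.-tuple V) : index z < 2 ^ n.
  by have := cycle_index_lt B s t z; rewrite size_tuple.
apply: ball_lipschitz => [z | z1 z2 z3 | ]; last exact: cycle_gap_adj.
  exact: cycdistnn.
exact: cycdist_triangle.
Qed.

Definition cycle_tuple n i : n.-tuple V := Tuple (introT eqP (size_cycle_word s t n i)).

Lemma val_cycle_tuple n i : val (cycle_tuple n i) = cycle_word s t n i.
Proof. by []. Qed.

Lemma cycle_tuple_ball n i j :
  cycle_tuple n (i + j) \in ball (schreier_adj o n) j (cycle_tuple n i) /\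
  cycle_tuple n i \in ball (schreier_adj o n) j (cycle_tuple n (i + j)).
Proof.
have adj k : schreier_adj o n (cycle_tuple n k) (cycle_tuple n k.+1).
  apply/existsP; exists (s, t).
  by rewrite o_st /= edge_act_cycle_word ?eqxx ?(neq_edge o_tree o_st).
elim: j i => [|j IH] i; first by rewrite addn0 !ball_center.
split; first by rewrite addnS; apply: ball_adj (proj1 (IH i)) (adj _).
rewrite -addSnnS; apply: ball_adj (proj2 (IH i.+1)) _.
by rewrite schreier_adj_sym.
Qed.

Lemma cycle_tuple_dist n i j K : i + j < 2 ^ n -> j.*2 <= 2 ^ n ->
  (cycle_tuple n (i + j) \in ball (schreier_adj o n) K (cycle_tuple n i)) = (j <= K) /\
  (cycle_tuple n i \in ball (schreier_adj o n) K (cycle_tuple n (i + j))) = (j <= K).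
Proof.
move=> lt half; have s_B := mem_branch_s o s t; have t_B := branch_t o_tree o_st.
have gap : cycle_gap (cycle_tuple n i) (cycle_tuple n (i + j)) = j.
  rewrite /cycle_gap /= !cycle_index_cycle_word // !modn_small ?(leq_ltn_trans (leq_addr j i)) //.
  by rewrite /cycdist; lia.
have [fwd bwd] := cycle_tuple_ball n i j.
split; apply/idP/idP => [| j_K].
- by rewrite -[X in X <= _]gap; apply: cycle_gap_ball.
- exact: ball_mono j_K _ fwd.
- by rewrite -[X in X <= _]gap /cycle_gap cycdistC; apply: cycle_gap_ball.
- exact: ball_mono j_K _ bwd.
Qed.

Section SpecialEdges.
Variable m : nat.

Local Notation r := (schreier_adj o m.+1).
Local Notation S := (last_branch o s t m).
Local Notation U := (nseq_tuple m.+1 s).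
Local Notation W := (nseq_tuple m.+1 t).
Local Notation P := (rcons_tuple (nseq_tuple m s) t).
Local Notation Q := (rcons_tuple (nseq_tuple m t) s).

(* W, P, Q, U sit at positions 0, 2^m - 1, 2^m, 2^(m+1) - 1 of the e-cycle. *)
Lemma special_edges_dist j :
  (P \in ball r j W) = (Q \in ball r j U) /\ (U \in ball r j Q) = (W \in ball r j P).
Proof.
have exp_gt0 : 0 < 2 ^ m by rewrite expn_gt0.
have -> : W = cycle_tuple m.+1 0 by apply: val_inj; rewrite val_cycle_tuple cycle_word0.
have -> : P = cycle_tuple m.+1 (0 + (2 ^ m).-1).
  by apply: val_inj; rewrite val_cycle_tuple add0n cycle_word_last_t.
have -> : Q = cycle_tuple m.+1 (2 ^ m).
  by apply: val_inj; rewrite val_cycle_tuple cycle_word_last_s.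
have -> : U = cycle_tuple m.+1 (2 ^ m + (2 ^ m).-1).
  apply: val_inj; rewrite val_cycle_tuple (_ : _ + _ = (2 ^ m.+1).-1).
    by rewrite cycle_word_pred_exp.
  by rewrite expnS; lia.
have lt_P : 0 + (2 ^ m).-1 < 2 ^ m.+1 by rewrite expnS; lia.
have lt_U : 2 ^ m + (2 ^ m).-1 < 2 ^ m.+1 by rewrite expnS; lia.
have half : (2 ^ m).-1.*2 <= 2 ^ m.+1 by rewrite expnS -mul2n; lia.
have [P_W W_P] := cycle_tuple_dist j lt_P half.
have [U_Q Q_U] := cycle_tuple_dist j lt_U half.
by rewrite P_W W_P U_Q Q_U.
Qed.

Lemma ncloser_special_edges :
  [/\ ncloser r U W = #|S|, ncloser r W U = #|~: S|,
      ncloser r P Q = #|~: S| & ncloser r Q P = #|S|].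
Proof.
have s_B := mem_branch_s o s t; have t_B := branch_t o_tree o_st.
have conn x y : y \in ball r #|{: m.+1.-tuple V}| x.
  exact/connect_ball/schreier_connected.
have cross x y : r x y -> x \notin S -> y \in S -> (x = W /\ y = U) \/ (x = P /\ y = Q).
  exact: schreier_cross.
have U_S : U \in S by rewrite mem_last_branch /= last_nseq.
have W_S : W \notin S by rewrite mem_last_branch /= last_nseq.
have P_S : P \notin S by rewrite mem_last_branch last_rcons.
have Q_S : Q \in S by rewrite mem_last_branch last_rcons.
have [-> ->] : ncloser r U W = #|S| /\ ncloser r W U = #|~: S|.
  apply: (ncloser_cut (@schreier_adj_sym _ o _) conn U_S W_S cross) => j.
  exact: (special_edges_dist j).1.
have [-> ->] : ncloser r P Q = #|~: S| /\ ncloser r Q P = #|~: ~: S|.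
  apply: (ncloser_cut (p := U) (q := W) (@schreier_adj_sym _ o _) conn).
  - by rewrite in_setC.
  - by rewrite in_setC negbK.
  - move=> x y; rewrite schreier_adj_sym !in_setC negbK => ryx x_S y_S.
    by have [[-> ->] | [-> ->]] := cross _ _ ryx y_S x_S; [right | left].
  - move=> j; exact: (special_edges_dist j).2.
by rewrite setCK.
Qed.

End SpecialEdges.

End SchreierDistance.

Lemma card_last_branch (V : finType) (o : rel V) (s t : V) m :
  #|last_branch o s t m| = #|branch o s t| * #|V| ^ m /\
  #|~: last_branch o s t m| = #|~: branch o s t| * #|V| ^ m.
Proof.
rewrite -!(card_last_in _ _ s); split; apply: eq_card => w.
  by rewrite mem_last_branch inE.
by rewrite in_setC mem_last_branch !inE.
Qed.

Lemma part_products a b K :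
  (a * K) * (b * K) = a * b * (K * K) /\
  a * b * (K * K) = a * K * ((a + b) * K - a * K) /\
  a * K * ((a + b) * K - a * K) = b * K * ((a + b) * K - b * K).
Proof.
rewrite mulnDl addKn addnK; split; first by rewrite mulnACA.
by split; [rewrite mulnACA | rewrite mulnC].
Qed.

Theorem lemma5p5 (V : finType) (o : rel V) (n : nat) (s t : V)
  (u v : n.-tuple V) :
  oriented_tree o -> 1 <= n -> o s t ->
  ((val u = nseq n s /\ val v = nseq n t) \/
   (val u = rcons (nseq n.-1 s) t /\ val v = rcons (nseq n.-1 t) s)) ->
  let k := #|V| in
  let a := ncloser (undir o) s t in
  let b := ncloser (undir o) t s in
  ncloser (schreier_adj o n) u v * ncloser (schreier_adj o n) v u
    = a * b * k ^ (2 * (n - 1)) /\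
  a * b * k ^ (2 * (n - 1)) = a * k ^ (n - 1) * (k ^ n - a * k ^ (n - 1)) /\
  a * k ^ (n - 1) * (k ^ n - a * k ^ (n - 1))
    = b * k ^ (n - 1) * (k ^ n - b * k ^ (n - 1)).
Proof.
case: n u v => [|m] u v o_tree // _ o_st special k a b.
have [a_B b_B] := ncloser_branch o_tree o_st.
have [card_S card_nS] := card_last_branch o s t m.
have k_ab : k = a + b by rewrite /a /b a_B b_B cardsC.
have [U_W W_U P_Q Q_P] := ncloser_special_edges o_tree o_st m.
have -> : ncloser (schreier_adj o m.+1) u v * ncloser (schreier_adj o m.+1) v u =
          #|last_branch o s t m| * #|~: last_branch o s t m|.
  case: special => -[u_val v_val]; rewrite (val_inj u_val) (val_inj v_val).
    by rewrite U_W W_U.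
  by rewrite P_Q Q_P mulnC.
have kS : k ^ m.+1 = (a + b) * k ^ m by rewrite expnS {1}k_ab.
rewrite card_S card_nS -a_B -b_B -/a -/b -/k subn1 /= mul2n -addnn expnD kS.
exact: part_products.
Qed.
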